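(* Let $I\subset\mathbb R$ be an interval and $f:I\to\mathbb R$ be $\mathcal G$-convex. Let $s$ be an interior point of $I$ at which $f$ is twice differentiable. Then $f(s)>0$ and $$f''(s)\ \ge\ \frac{1-f'(s)^2}{f(s)}.$$
   Context: $\mathcal G:=\{t\mapsto\sqrt{(t-t_0)^2+h^2}:\ t_0\in\mathbb R,\ h\ge0\}$. A function $f:I\to\mathbb R$ on an interval $I$ is $\mathcal G$-convex if for every $t_0\in I$ there is $g\in\mathcal G$ with $g(t_0)=f(t_0)$ and $g(u)\le f(u)$ for all $u\in I$. *)

From Stdlib Require Import Reals.
From Coquelicot Require Import Coquelicot.
Open Scope R_scope.

Definition is_interval (I : R -> Prop) : Prop :=
  forall x y z, I x -> I z -> x <= y -> y <= z -> I y.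

Definition Gfun (t0 h : R) (t : R) : R := sqrt ((t - t0) ^ 2 + h ^ 2).

Definition G_convex (I : R -> Prop) (f : R -> R) : Prop :=
  forall t0, I t0 ->
    exists a h, 0 <= h /\ Gfun a h t0 = f t0 /\
      (forall u, I u -> Gfun a h u <= f u).

Definition interior_pt (I : R -> Prop) (s : R) : Prop :=
  exists eps, 0 < eps /\ forall x, Rabs (x - s) < eps -> I x.

Definition twice_differentiable_at (f : R -> R) (s : R) : Prop :=
  (exists eps, 0 < eps /\ forall x, Rabs (x - s) < eps -> ex_derive f x) /\
  ex_derive (Derive f) s.

From Stdlib Require Import Reals Lra Psatz.
From Coquelicot Require Import Coquelicot.
Open Scope R_scope.

(* Fix an interior point s of I and a supporting function
   g = Gfun a h from the family G with g <= f on I and g s = f s.  Then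
   f - g has a local minimum at s, so the first- and second-order necessary
   conditions give f'(s) = g'(s) and f''(s) >= g''(s).

   Positivity f(s) > 0 comes from
   the same first-order condition: if f(s) = 0 the support is t |-> |t - s|,
   whose corner at s is incompatible with differentiability of f. *)

Definition local_min (phi : R -> R) (s : R) : Prop :=
  exists e, 0 < e /\ forall x, Rabs (x - s) < e -> phi s <= phi x.

Lemma Rabs_center (s e : R) : 0 < e -> Rabs (s - s) < e.
Proof. intros He. replace (s - s) with 0 by ring. rewrite Rabs_R0. exact He. Qed.

Lemma derive_local_min (phi : R -> R) (s l : R) :
  is_derive phi s l -> local_min phi s -> l = 0.
Proof.
  intros Hd [e [He Hmin]].
  apply is_derive_Reals in Hd.
  set (pr := exist (fun l => derivable_pt_lim phi s l) l Hd : derivable_pt phi s).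
  change l with (derive_pt phi s pr).
  apply (deriv_minimum phi (s - e) (s + e) s pr); [lra | lra |].
  intros x Hx1 Hx2. apply Hmin. apply Rabs_def1; lra.
Qed.

Lemma neg_derive_right (u : R -> R) (s D : R) :
  is_derive u s D -> D < 0 ->
  exists d, 0 < d /\ forall c, s < c < s + d -> u c < u s.
Proof.
  intros Hd HD. apply is_derive_Reals in Hd.
  destruct (Hd (- D / 2)) as [del Hdel]; [lra |].
  exists del. split; [apply cond_pos |].
  intros c Hc.
  assert (Hq : (u (s + (c - s)) - u s) / (c - s) < D / 2).
  { assert (Habs : Rabs (c - s) < del) by (apply Rabs_def1; lra).
    specialize (Hdel (c - s) ltac:(lra) Habs).
    apply Rabs_def2 in Hdel. lra. }
  replace (s + (c - s)) with c in Hq by ring.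
  destruct (Rlt_or_le (u c) (u s)) as [| Hge]; [assumption |].
  exfalso.
  assert (0 <= (u c - u s) / (c - s)).
  { apply Rdiv_le_0_compat; lra. }
  lra.
Qed.

Lemma derive2_local_min (phi phi' : R -> R) (s e D : R) :
  0 < e ->
  (forall x, Rabs (x - s) < e -> is_derive phi x (phi' x)) ->
  is_derive phi' s D ->
  (forall x, Rabs (x - s) < e -> phi s <= phi x) ->
  D >= 0.
Proof.
  intros He Hd Hd2 Hmin.
  assert (Hcrit : phi' s = 0).
  { apply (derive_local_min phi s); [apply Hd, Rabs_center, He |].
    exists e. split; assumption. }
  destruct (Rlt_or_le D 0) as [Hneg |]; [| lra].
  exfalso.
  destruct (neg_derive_right phi' s D Hd2 Hneg) as [d [Hd0 Hslope]].
  set (t := Rmin d e / 2).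
  assert (Hmin_pos : 0 < Rmin d e) by (apply Rmin_pos; lra).
  assert (Ht : 0 < t /\ t < d /\ t < e).
  { pose proof (Rmin_l d e). pose proof (Rmin_r d e). unfold t. lra. }
  destruct (MVT_cor2 phi phi' s (s + t)) as [c [Hmvt Hc]]; [lra | |].
  { intros c Hc. apply is_derive_Reals, Hd. apply Rabs_def1; lra. }
  assert (phi' c < 0) by (rewrite <- Hcrit; apply Hslope; lra).
  assert (phi s <= phi (s + t)).
  { apply Hmin. apply Rabs_def1; lra. }
  assert (phi' c * (s + t - s) < 0) by (replace (s + t - s) with t by ring; nra).
  lra.
Qed.

Lemma touching_from_below (f g g' : R -> R) (s e g2 : R) :
  0 < e ->
  (forall x, Rabs (x - s) < e -> ex_derive f x) ->
  ex_derive (Derive f) s ->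
  (forall x, Rabs (x - s) < e -> is_derive g x (g' x)) ->
  is_derive g' s g2 ->
  (forall x, Rabs (x - s) < e -> g x <= f x) ->
  g s = f s ->
  Derive f s = g' s /\ Derive (Derive f) s >= g2.
Proof.
  intros He Hf Hf2 Hg Hg2 Hle Heq.
  set (phi := fun x => f x - g x).
  assert (Hphi : forall x, Rabs (x - s) < e -> is_derive phi x (Derive f x - g' x)).
  { intros x Hx. apply (is_derive_minus f g); [apply Derive_correct, Hf | apply Hg]; exact Hx. }
  assert (Hphi2 : is_derive (fun x => Derive f x - g' x) s (Derive (Derive f) s - g2)).
  { apply (is_derive_minus (Derive f) g'); [apply Derive_correct, Hf2 | exact Hg2]. }
  assert (Hmin : forall x, Rabs (x - s) < e -> phi s <= phi x).
  { intros x Hx. unfold phi. rewrite Heq. specialize (Hle x Hx). lra. }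
  split.
  - assert (Derive f s - g' s = 0); [| lra].
    apply (derive_local_min phi s); [apply Hphi, Rabs_center, He |].
    exists e. split; assumption.
  - pose proof (derive2_local_min phi _ s e _ He Hphi Hphi2 Hmin). lra.
Qed.

(* A function vanishing at s and bounded below by |x - s| near s has a
   corner there: f - (x - s) and f + (x - s) both have a local minimum at s,
   which would force f'(s) = 1 and f'(s) = -1. *)
Lemma abs_corner_not_derivable (f : R -> R) (s e : R) :
  0 < e -> f s = 0 ->
  (forall x, Rabs (x - s) < e -> Rabs (x - s) <= f x) ->
  ~ ex_derive f s.
Proof.
  intros He Hf0 Hle Hd.
  assert (Hlin : forall k, is_derive (fun x => f x - k * (x - s)) s (Derive f s - k)).
  { intros k. apply (is_derive_minus f (fun x => k * (x - s))); [apply Derive_correct, Hd |].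
    auto_derive; [exact I | ring]. }
  assert (Hmin : forall k, -1 <= k <= 1 -> local_min (fun x => f x - k * (x - s)) s).
  { intros k Hk. exists e. split; [exact He |]. intros x Hx.
    specialize (Hle x Hx). rewrite Hf0.
    pose proof (Rle_abs (x - s)). pose proof (Rle_abs (- (x - s))).
    rewrite Rabs_Ropp in *. replace (s - s) with 0 by ring. nra. }
  pose proof (derive_local_min _ s _ (Hlin 1) (Hmin 1 ltac:(lra))).
  pose proof (derive_local_min _ s _ (Hlin (-1)) (Hmin (-1) ltac:(lra))).
  lra.
Qed.

Lemma Gfun_nonneg (a h t : R) : 0 <= Gfun a h t.
Proof. apply sqrt_pos. Qed.

Lemma Gfun_sqr (a h t : R) : Gfun a h t ^ 2 = (t - a) ^ 2 + h ^ 2.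
Proof.
  unfold Gfun. rewrite pow2_sqrt; [reflexivity |].
  pose proof (pow2_ge_0 (t - a)). pose proof (pow2_ge_0 h). lra.
Qed.

Lemma Gfun_flat (a t : R) : Gfun a 0 t = Rabs (t - a).
Proof.
  unfold Gfun. replace ((t - a) ^ 2 + 0 ^ 2) with (Rsqr (t - a)) by (unfold Rsqr; ring).
  apply sqrt_Rsqr_abs.
Qed.

Lemma Gfun_eq0 (a h t : R) : Gfun a h t = 0 -> t = a /\ h = 0.
Proof.
  intros H0. pose proof (Gfun_sqr a h t) as Hsq. rewrite H0 in Hsq.
  assert (E : Rsqr (t - a) + Rsqr h = 0) by (unfold Rsqr; simpl in Hsq; lra).
  apply Rplus_sqr_eq_0 in E. lra.
Qed.

(* Gfun a h stays positive on the ball of radius Gfun a h s around s: its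
   only possible zero is the center a when h = 0, and then Gfun a h s = |s - a|. *)
Lemma Gfun_pos_near (a h s x : R) :
  Rabs (x - s) < Gfun a h s -> 0 < Gfun a h x.
Proof.
  intros Hx.
  destruct (Rle_lt_or_eq_dec 0 _ (Gfun_nonneg a h x)) as [| E]; [assumption |].
  exfalso. destruct (Gfun_eq0 a h x (eq_sym E)) as [<- ->].
  rewrite Gfun_flat, <- Rabs_Ropp in Hx.
  replace (- (x - s)) with (s - x) in Hx by ring. lra.
Qed.

Lemma is_derive_Gfun (a h t : R) :
  0 < Gfun a h t -> is_derive (Gfun a h) t ((t - a) / Gfun a h t).
Proof.
  intros Hpos. unfold Gfun in *. auto_derive.
  - apply Rlt_gt, sqrt_lt_0_alt. rewrite sqrt_0.
    replace ((t + - a) * ((t + - a) * 1) + h * (h * 1)) with ((t - a) ^ 2 + h ^ 2) by ring.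
    exact Hpos.
  - replace ((t + - a) * ((t + - a) * 1) + h * (h * 1)) with ((t - a) ^ 2 + h ^ 2) by ring.
    field. lra.
Qed.

Lemma is_derive_Gfun_slope (a h t : R) :
  0 < Gfun a h t ->
  is_derive (fun x => (x - a) / Gfun a h x) t
    ((1 - ((t - a) / Gfun a h t) ^ 2) / Gfun a h t).
Proof.
  intros Hpos.
  replace ((1 - ((t - a) / Gfun a h t) ^ 2) / Gfun a h t)
    with ((1 * Gfun a h t - (t - a) * ((t - a) / Gfun a h t)) / Gfun a h t ^ 2)
    by (field; lra).
  apply (is_derive_div (fun x => x - a) (Gfun a h)); [| apply is_derive_Gfun, Hpos | lra].
  auto_derive; [exact I | ring].
Qed.

(* A member of G touching f from below at s forces f(s) > 0: otherwise the
   support is the corner t |-> |t - s| and f could not be differentiable. *)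
Lemma G_support_value_pos (f : R -> R) (a h s e : R) :
  0 < e -> ex_derive f s -> Gfun a h s = f s ->
  (forall x, Rabs (x - s) < e -> Gfun a h x <= f x) ->
  0 < f s.
Proof.
  intros He Hd Hgs Hle. rewrite <- Hgs.
  destruct (Rle_lt_or_eq_dec 0 _ (Gfun_nonneg a h s)) as [| E]; [assumption |].
  exfalso. destruct (Gfun_eq0 a h s (eq_sym E)) as [<- ->].
  apply (abs_corner_not_derivable f s e He); [congruence | | exact Hd].
  intros x Hx. rewrite <- Gfun_flat. apply Hle, Hx.
Qed.

Theorem mainTheorem17 (I : R -> Prop) (f : R -> R) (s : R) :
  is_interval I -> G_convex I f -> interior_pt I s ->
  twice_differentiable_at f s ->
  0 < f s /\
  Derive (Derive f) s >= (1 - (Derive f s) ^ 2) / f s.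
Proof.
  intros _ HG [e1 [He1 HI]] [[e2 [He2 Hdf]] Hd2f].
  destruct (HG s (HI s (Rabs_center s e1 He1))) as [a [h [_ [Hgs Hle]]]].
  assert (Hpos : 0 < f s).
  { apply (G_support_value_pos f a h s e1 He1); [apply Hdf, Rabs_center, He2 | exact Hgs |].
    intros x Hx. apply Hle, HI, Hx. }
  split; [exact Hpos |].
  (* On a ball of radius min(e1, e2, f s): x is in I, f is differentiable
     at x, and the supporting function is positive, hence smooth, at x. *)
  set (e := Rmin e1 (Rmin e2 (f s))).
  assert (He : 0 < e) by (apply Rmin_pos; [| apply Rmin_pos]; lra).
  assert (Hball : forall x, Rabs (x - s) < e ->
      Rabs (x - s) < e1 /\ Rabs (x - s) < e2 /\ Rabs (x - s) < Gfun a h s).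
  { intros x Hx. rewrite Hgs. unfold e in Hx.
    apply Rmin_Rgt_l in Hx as [Hx1 Hx]. apply Rmin_Rgt_l in Hx as [Hx2 Hx3]. lra. }
  destruct (touching_from_below f (Gfun a h) (fun x => (x - a) / Gfun a h x) s e
              ((1 - ((s - a) / Gfun a h s) ^ 2) / Gfun a h s) He) as [Hd1 Hd2].
  - intros x Hx. destruct (Hball x Hx) as (_ & Hx2 & _). apply Hdf, Hx2.
  - exact Hd2f.
  - intros x Hx. destruct (Hball x Hx) as (_ & _ & Hx3).
    apply is_derive_Gfun, (Gfun_pos_near a h s x Hx3).
  - apply is_derive_Gfun_slope. lra.
  - intros x Hx. destruct (Hball x Hx) as (Hx1 & _ & _). apply Hle, HI, Hx1.
  - exact Hgs.
  - rewrite Hd1, <- Hgs. exact Hd2.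
Qed.
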